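(* There is an absolute constant $c>0$ such that for every $\ell\ge 2$, every deterministic online algorithm for the soft allocation problem in dimension $\ell$ with all weights equal to $1$ has competitive ratio at least $c\,\ell$. That is, the competitive ratio of soft allocation is $\Omega(\ell)$.
   Context: Soft allocation problem in dimension $\ell$ with weights $w\in(0,\infty)^\ell$: an algorithm maintains $x(t)\in\Delta^{\ell-1}=\{x\in[0,1]^\ell:\sum_i x_i=1\}$ starting from some $x(0)$. At each time $t=1,2,\dots$ a direction $r_t\in\{1,\dots,\ell\}$ and a non-increasing function $f_t:[0,1]\to\mathbb{R}_{\ge0}\cup\{\infty\}$ are revealed; the algorithm moves from $x(t-1)$ to $x(t)$ knowing only data revealed so far, paying $\sum_i w_i|x_i(t)-x_i(t-1)|+f_t(x_{r_t}(t))$. An online algorithm is $\rho$-competitive if there is $b$ independent of the request sequence such that its total cost is at most $\rho\cdot\mathrm{OPT}+b$ on every sequence, where $\mathrm{OPT}$ is the optimal offline total cost. *)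

From mathcomp Require Import all_boot all_order all_algebra.
From mathcomp Require Import all_classical all_reals.
From mathcomp Require Import ereal.
Set Implicit Arguments. Unset Strict Implicit. Unset Printing Implicit Defensive.
Import Order.TTheory GRing.Theory Num.Theory.
Local Open Scope classical_set_scope.
Local Open Scope ring_scope.

Section SoftAllocation.
Variables (R : realType) (l : nat).

Definition point := 'I_l -> R.

Definition in_simplex (x : point) : Prop :=
  (forall i, 0 <= x i <= 1) /\ \sum_(i < l) x i = 1.

(* A request: a direction r_t and a cost function f_t (extended-real valued,
   only its values on [0,1] matter). *)
Definition request := ('I_l * (R -> \bar R))%type.

Definition valid_fun (f : R -> \bar R) : Prop :=
  (forall a, 0 <= a <= 1 -> (0 <= f a)%E) /\
  (forall a b, 0 <= a -> a <= b -> b <= 1 -> (f b <= f a)%E).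

Definition valid_seq (s : seq request) : Prop :=
  forall rq, rq \in s -> valid_fun rq.2.

(* Total cost of a trajectory y (y 0 = starting point, y t = position after
   serving the t-th request) on request sequence s, with weights w. *)
Definition traj_cost (w : 'I_l -> R) (y : nat -> point) (s : seq request)
  : \bar R :=
  (\sum_(p <- zip (iota 0 (size s)) s)
     ((\sum_(i < l) w i * `|y p.1.+1 i - y p.1 i|)%:E
      + p.2.2 (y p.1.+1 p.2.1)))%E.

Definition OPT (w : 'I_l -> R) (x0 : point) (s : seq request) : \bar R :=
  ereal_inf [set traj_cost w y s | y in
               [set y : nat -> point | y 0%N = x0 /\ forall t, in_simplex (y t)]].

(* A deterministic online algorithm: its position after the first t requests
   is a function of those t requests only; A [::] is the starting point x(0). *)
Definition online_alg := seq request -> point.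

Definition alg_valid (A : online_alg) : Prop :=
  forall s, valid_seq s -> in_simplex (A s).

Definition alg_traj (A : online_alg) (s : seq request) : nat -> point :=
  fun t => A (take t s).

Definition alg_cost (w : 'I_l -> R) (A : online_alg) (s : seq request)
  : \bar R := traj_cost w (alg_traj A s) s.

Definition competitive (w : 'I_l -> R) (A : online_alg) (rho : R) : Prop :=
  exists b : R, forall s, valid_seq s ->
    (alg_cost w A s <= rho%:E * OPT w (A [::]) s + b%:E)%E.

End SoftAllocation.

(* The adversary fixes a threshold th = 1/(l-1) and a penalty eps = th - 1/l > 0,
   and always requests the coordinate r currently carrying the least mass (at
   most 1/l) together with the cost function "eps below th, 0 from th on".
   The online algorithm pays at least eps per request: either it leaves x_r
   below th, or it moves at least th - 1/l = eps mass.  Offline, the l "hedge"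
   trajectories that jump once to the point with a 0 at coordinate j and th
   elsewhere cost at most 2 + eps * #{t | r_t = j} each, hence at most
   2l + n eps together, so
   l * OPT <= n eps + 2l.  Comparing n eps <= rho OPT + b for all n forces
   rho >= l, so the theorem holds with c = 1. *)
From Pilot Require Import Defs.
From mathcomp Require Import all_boot all_order all_algebra.
From mathcomp Require Import all_classical all_reals.
From mathcomp Require Import ereal.
From mathcomp Require Import lra.
Set Implicit Arguments. Unset Strict Implicit. Unset Printing Implicit Defensive.
Import Order.TTheory GRing.Theory Num.Theory.
Local Open Scope ring_scope.

Lemma big_zip_iota (T V : Type) (idx : V) (op : V -> V -> V) (q0 : T)
    (F : nat * T -> V) (s : seq T) (m : nat) :
  \big[op/idx]_(p <- zip (iota m (size s)) s) F p =
  \big[op/idx]_(0 <= t < size s) F ((m + t)%N, nth q0 s t).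
Proof.
elim: s m => [|x s IH] m /=; first by rewrite big_nil big_geq.
rewrite big_cons big_nat_recl // addn0 IH.
by congr (op _); apply: eq_bigr => t _; rewrite addSnnS.
Qed.

Lemma ratio_from_linear_growth (R : realType) (e L C rho b : R) :
  0 < e -> 0 < L ->
  (forall n : nat, exists2 o, 0 <= o /\ L * o <= n%:R * e + C
                            & n%:R * e <= rho * o + b) ->
  L <= rho.
Proof.
move=> e_gt0 L_gt0 growth; rewrite leNgt; apply/negP => rho_lt_L.
(* r = max(rho, 0) is below L and bounds rho * o from above since o >= 0. *)
pose r := Num.max rho 0.
have r_ge0 : 0 <= r by rewrite le_max lexx orbT.
have rho_le_r : rho <= r by rewrite le_max lexx.
have r_lt_L : r < L by rewrite gt_max rho_lt_L.
have gap_gt0 : 0 < e * (L - r) by rewrite mulr_gt0 // subr_gt0.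
pose K := (r * C + L * b) / (e * (L - r)).
pose n := Num.bound `|K|.
have K_lt_n : K < n%:R.
  by apply: le_lt_trans (ler_norm K) (archi_boundP (normr_ge0 K)).
have too_big : r * C + L * b < n%:R * (e * (L - r)).
  by rewrite -[_ + _](divfK (lt0r_neq0 gap_gt0)) ltr_pM2r.
have [o [o_ge0 o_le] online] := growth n.
have online_r : n%:R * e <= r * o + b.
  by apply: le_trans online _; rewrite lerD2r ler_wpM2r.
have offline_scaled : r * (L * o) <= r * (n%:R * e + C) by rewrite ler_wpM2l.
have online_scaled : L * (n%:R * e) <= L * (r * o + b).
  by rewrite ler_wpM2l // ltW.
nra.
Qed.

Lemma simplex_dist (R : realType) (l : nat) (x y : Defs.point R l) :
  in_simplex x -> in_simplex y -> \sum_(i < l) `|y i - x i| <= 2.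
Proof.
move=> [x_ge0 x_sum] [y_ge0 y_sum].
rewrite -[2]/(1 + 1) -{1}x_sum -y_sum -big_split /=; apply: ler_sum => i _.
have /andP [xi_ge0 _] := x_ge0 i; have /andP [yi_ge0 _] := y_ge0 i.
by rewrite (le_trans (ler_normB _ _)) // !ger0_norm // addrC.
Qed.

Section Adversary.
Variables (R : realType) (l : nat).
Hypothesis l_ge2 : (2 <= l)%N.

Let L : R := l%:R.
Let i0 : 'I_l := Ordinal (ltnW l_ge2).

Definition threshold : R := (l.-1)%:R^-1.
Definition penalty_amount : R := threshold - L^-1.

Lemma L_succ_pred : L = (l.-1)%:R + 1.
Proof. by rewrite /L natr1 prednK // (leq_trans _ l_ge2). Qed.

Lemma pred_l_ge1 : 1 <= (l.-1)%:R :> R.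
Proof. by rewrite ler1n -ltnS prednK // (leq_trans _ l_ge2). Qed.

Lemma L_gt0 : 0 < L.
Proof. by rewrite L_succ_pred; have := pred_l_ge1; lra. Qed.

Lemma threshold_gt0 : 0 < threshold.
Proof. by rewrite invr_gt0; have := pred_l_ge1; lra. Qed.

Lemma threshold_le1 : threshold <= 1.
Proof. by rewrite invf_le1; have := pred_l_ge1; lra. Qed.

Lemma penalty_amount_gt0 : 0 < penalty_amount.
Proof.
rewrite subr_gt0 ltf_pV2 ?posrE; have := L_succ_pred; have := pred_l_ge1; lra.
Qed.

Definition penalty (x : R) : R := if x < threshold then penalty_amount else 0.
Definition penaltyE (x : R) : \bar R := (penalty x)%:E.

Lemma penalty_ge0 x : 0 <= penalty x.
Proof. by rewrite /penalty; case: ifP => _ //; exact: ltW penalty_amount_gt0. Qed.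

Lemma penaltyE_valid : valid_fun penaltyE.
Proof.
split=> [x _|x y _ le_xy _]; rewrite /penaltyE lee_fin ?penalty_ge0 //.
rewrite /penalty; case: (ltP y threshold) => y_th.
  by rewrite (le_lt_trans le_xy y_th).
by case: ifP => _ //; exact: ltW penalty_amount_gt0.
Qed.

Variable A : online_alg R l.
Hypothesis A_valid : alg_valid A.

Definition light_coord (s : seq (request R l)) : 'I_l :=
  [arg min_(i < i0) A s i]%O.

Fixpoint adversary (n : nat) : seq (request R l) :=
  if n is n'.+1
  then rcons (adversary n') (light_coord (adversary n'), penaltyE)
  else [::].

Lemma size_adversary n : size (adversary n) = n.
Proof. by elim: n => //= n IH; rewrite size_rcons IH. Qed.

Lemma adversary_valid n : valid_seq (adversary n).
Proof.
elim: n => [|n IH] rq //=; rewrite mem_rcons inE => /orP [/eqP -> | /IH //].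
exact: penaltyE_valid.
Qed.

Lemma take_adversary n t : (t <= n)%N -> take t (adversary n) = adversary t.
Proof.
elim: n => [|n IH]; first by rewrite leqn0 => /eqP ->.
rewrite leq_eqVlt => /orP [/eqP -> | t_le_n].
  by rewrite take_oversize // size_adversary.
by rewrite /= -cats1 takel_cat ?size_adversary // IH.
Qed.

Lemma nth_adversary n t q0 : (t < n)%N ->
  nth q0 (adversary n) t = (light_coord (adversary t), penaltyE).
Proof.
move=> t_lt_n; rewrite -(nth_take q0 (ltnSn t)) take_adversary //= nth_rcons.
by rewrite size_adversary ltnn eqxx.
Qed.

Lemma light_coord_small s : valid_seq s -> A s (light_coord s) <= L^-1.
Proof.
move=> s_valid; have [_ sum1] := A_valid s_valid.
rewrite /light_coord; case: arg_minP => // r _ r_min.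
have : \sum_(i < l) A s r <= \sum_(i < l) A s i.
  by apply: ler_sum => i _; exact: r_min.
rewrite sum1 sumr_const card_ord -mulr_natl -/L => mass_bound.
by rewrite -(ler_pM2l L_gt0) mulfV ?gt_eqF ?L_gt0.
Qed.

Definition step_cost (y : nat -> Defs.point R l) (t : nat) : R :=
  \sum_(i < l) `|y t.+1 i - y t i| + penalty (y t.+1 (light_coord (adversary t))).

Lemma traj_cost_adversary (y : nat -> Defs.point R l) n :
  traj_cost (fun _ => 1%R) y (adversary n) = (\sum_(t < n) step_cost y t)%:E.
Proof.
rewrite /traj_cost (big_zip_iota _ _ (i0, penaltyE)) size_adversary big_mkord.
rewrite -sumEFin; apply: eq_bigr => t _; rewrite add0n nth_adversary //= EFinD.
by congr (_%:E + _)%E; apply: eq_bigr => i _; rewrite mul1r.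
Qed.

(* Each request costs the online algorithm at least eps: either the
   requested light coordinate stays below the threshold, or it is raised
   from at most 1/l to at least th. *)
Lemma online_step_cost t :
  penalty_amount <= step_cost (fun k => A (adversary k)) t.
Proof.
rewrite /step_cost; set x := A (adversary t); set x' := A (adversary t.+1).
set r := light_coord _.
have move_ge0 : 0 <= \sum_(i < l) `|x' i - x i| by apply: sumr_ge0.
rewrite /penalty; case: ltP => [_|x'_high]; first by lra.
have x_low : x r <= L^-1 by exact: (light_coord_small (@adversary_valid t)).
have : `|x' r - x r| <= \sum_(i < l) `|x' i - x i|.
  by rewrite (bigD1 r) //= lerDl; apply: sumr_ge0.
have := ler_norm (x' r - x r); rewrite /penalty_amount; lra.
Qed.

Lemma online_cost_adversary n :
  ((n%:R * penalty_amount)%:E <= alg_cost (fun _ => 1%R) A (adversary n))%E.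
Proof.
rewrite /alg_cost traj_cost_adversary lee_fin.
rewrite mulr_natl -[n in _ *+ n]card_ord -sumr_const; apply: ler_sum => t _.
by rewrite /step_cost /alg_traj !take_adversary // ?online_step_cost // ltnW.
Qed.

Let x0 : Defs.point R l := A [::].

Lemma x0_simplex : in_simplex x0.
Proof. by apply: A_valid => q; rewrite in_nil. Qed.

Definition spread (j : 'I_l) : Defs.point R l :=
  fun i => if i == j then 0 else threshold.
Definition hedge (j : 'I_l) (t : nat) : Defs.point R l :=
  if t is 0 then x0 else spread j.

Lemma spread_simplex j : in_simplex (spread j).
Proof.
split=> [i|]; first by rewrite /spread; case: ifP => _;
  rewrite ?lexx ?ler01 ?(ltW threshold_gt0) ?threshold_le1.
rewrite (bigD1 j) //= /spread eqxx add0r.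
rewrite (eq_bigr (fun=> threshold)) => [|i /negbTE -> //].
rewrite sumr_const cardC1 card_ord -mulr_natl mulfV // gt_eqF //.
by have := pred_l_ge1; lra.
Qed.

Lemma hedge_feasible j : hedge j 0 = x0 /\ forall t, in_simplex (hedge j t).
Proof. by split=> // -[|t]; [exact: x0_simplex | exact: spread_simplex]. Qed.

(* Only the hedge avoiding coordinate r is penalized by a request on r. *)
Lemma hedges_penalty r : \sum_(j < l) penalty (spread j r) = penalty_amount.
Proof.
rewrite (bigD1 r) //= /spread eqxx /penalty threshold_gt0.
rewrite big1 ?addr0 // => j j_r.
by rewrite eq_sym (negbTE j_r) ltxx.
Qed.

(* Together the l hedges pay at most 2 each for their single move, and
   eps per request overall. *)
Lemma hedges_cost n :
  \sum_(j < l) \sum_(t < n) step_cost (hedge j) t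
    <= n%:R * penalty_amount + 2 * L.
Proof.
have := L_gt0; rewrite exchange_big /=; case: n => [|n] L_pos.
  by rewrite big_ord0 mul0r add0r mulr_ge0 // ltW.
rewrite big_ord_recl /= -natr1 mulrDl mul1r.
have first_step : \sum_(j < l) step_cost (hedge j) 0 <= penalty_amount + 2 * L.
  rewrite big_split /= hedges_penalty addrC lerD2l /L mulr_natr.
  rewrite -[l in _ *+ l]card_ord -sumr_const; apply: ler_sum => j _.
  exact: simplex_dist x0_simplex (spread_simplex j).
have later_steps (t : 'I_n) :
    \sum_(j < l) step_cost (hedge j) (bump 0 t) = penalty_amount.
  rewrite big_split /= hedges_penalty big1 ?add0r // => j _.
  by rewrite big1 // => i _; rewrite subrr normr0.
rewrite (eq_bigr _ (fun t _ => later_steps t)) sumr_const card_ord -mulr_natl.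
lra.
Qed.

Lemma traj_cost_ge0 (y : nat -> Defs.point R l) n :
  (0 <= traj_cost (fun _ => 1%R) y (adversary n))%E.
Proof.
rewrite traj_cost_adversary lee_fin; apply: sumr_ge0 => t _.
by apply: addr_ge0; [exact: sumr_ge0 | exact: penalty_ge0].
Qed.

Lemma OPT_adversary n : exists2 o : R,
  OPT (fun _ => 1%R) x0 (adversary n) = o%:E &
  0 <= o /\ L * o <= n%:R * penalty_amount + 2 * L.
Proof.
set opt := OPT _ _ _.
have opt_ge0 : (0 <= opt)%E.
  by apply: le_ereal_inf_tmp => _ [y _ <-]; exact: traj_cost_ge0.
have opt_le_hedge j : (opt <= (\sum_(t < n) step_cost (hedge j) t)%:E)%E.
  rewrite -traj_cost_adversary; apply: ge_ereal_inf.
  exists (traj_cost (fun _ => 1%R) (hedge j) (adversary n)) => //.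
  by exists (hedge j) => //; exact: hedge_feasible.
move: opt_ge0 opt_le_hedge; case: opt => [o | | //] o_ge0 o_le.
  2: by have := o_le i0.
exists o => //; split; first by rewrite -lee_fin.
apply: le_trans (hedges_cost n).
rewrite /L mulr_natl -[l in _ *+ l]card_ord -sumr_const.
by apply: ler_sum => j _; rewrite -lee_fin.
Qed.

End Adversary.

Theorem proposition1 (R : realType) :
  exists c : R, 0 < c /\
    forall (l : nat), (2 <= l)%N ->
    forall (A : online_alg R l), alg_valid A ->
    forall rho : R, competitive (fun _ => 1) A rho -> c * l%:R <= rho.
Proof.
exists 1; split=> [|l l_ge2 A A_valid rho [b A_comp]]; first exact: ltr01.
rewrite mul1r; apply: (@ratio_from_linear_growth _ _ _ (2 * l%:R) _ b
  (penalty_amount_gt0 R l_ge2) (L_gt0 R l_ge2)) => n.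
have [o OPT_o o_bound] := OPT_adversary l_ge2 A_valid n.
exists o; first exact: o_bound.
have := le_trans (online_cost_adversary l_ge2 A_valid n)
  (A_comp _ (@adversary_valid _ _ l_ge2 A n)).
by rewrite OPT_o -EFinM -EFinD lee_fin.
Qed.
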